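(* Let $\Gamma_L$, $\Gamma_R$ and $\psi$ be $\Delta_0$ formulas, and let $C = \mathrm{FV}(\Gamma_L) \cap (\mathrm{FV}(\Gamma_R)\cup\mathrm{FV}(\psi))$. If $\Gamma_L, \Gamma_R \models \psi$, then there is a $\Delta_0$ formula $\theta$ with $\mathrm{FV}(\theta)\subseteq C$ such that $\Gamma_L\models\theta$ and $\Gamma_R,\theta\models\psi$.
   Context: Types: $T,U ::= \mathfrak U \mid \mathsf{Unit}\mid T\times U\mid \mathsf{Set}(T)$ interpreted as nested relations (atoms, the one-element set, products, all subsets). Terms: $x \mid \langle\rangle \mid \langle t,u\rangle \mid \pi_1(t)\mid\pi_2(t)$. $\Delta_0$ formulas: $t =_{\mathfrak U} u \mid t \neq_{\mathfrak U} u \mid \top \mid \bot \mid \varphi\vee\psi \mid \varphi\wedge\psi \mid \forall x \in t\,\varphi \mid \exists x\in t\,\varphi$ (bounded quantification over terms of set type); negation is defined by dualization. $\Gamma\models\psi$ means every assignment of nested relations (finite or infinite) to the free variables satisfying all formulas in $\Gamma$ satisfies $\psi$ (equivalently, for $\Delta_0$ formulas, every typed first-order model in which projections and tupling commute). *)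

From Stdlib Require Import List Arith.
Import ListNotations.

Inductive ty : Type :=
| TUr : ty
| TUnit : ty
| TProd : ty -> ty -> ty
| TSet : ty -> ty.

Definition ty_eq_dec : forall T S : ty, {T = S} + {T <> S}.
Proof. decide equality. Defined.

Definition var : Type := (nat * ty)%type.

Inductive term : ty -> Type :=
| tvar : forall (n : nat) (T : ty), term T
| tunit : term TUnit
| tpair : forall T S, term T -> term S -> term (TProd T S)
| tpi1 : forall T S, term (TProd T S) -> term T
| tpi2 : forall T S, term (TProd T S) -> term S.

(* Delta_0 formulas; the bounded quantifiers bind the variable (n, T)
   ranging over the elements of a term of type Set(T). *)
Inductive formula : Type :=
| fEq : term TUr -> term TUr -> formula
| fNeq : term TUr -> term TUr -> formula
| fTop : formula
| fBot : formula
| fOr : formula -> formula -> formula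
| fAnd : formula -> formula -> formula
| fAll : forall (n : nat) (T : ty), term (TSet T) -> formula -> formula
| fEx : forall (n : nat) (T : ty), term (TSet T) -> formula -> formula.

(* Semantics over an atom domain A: nested relations (all subsets). *)
Fixpoint interp (A : Type) (T : ty) : Type :=
  match T with
  | TUr => A
  | TUnit => unit
  | TProd T1 T2 => (interp A T1 * interp A T2)%type
  | TSet T1 => interp A T1 -> Prop
  end.

Definition env (A : Type) : Type := forall (n : nat) (T : ty), interp A T.

Definition upd {A : Type} (e : env A) (n : nat) (T : ty) (a : interp A T) : env A :=
  fun m S =>
    match Nat.eq_dec n m, ty_eq_dec T S with
    | left _, left eTS => eq_rect T (interp A) a S eTS
    | _, _ => e m S
    end.

Fixpoint teval {A : Type} (e : env A) {T : ty} (t : term T) : interp A T :=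
  match t in term T return interp A T with
  | tvar n T => e n T
  | tunit => tt
  | tpair _ _ t1 t2 => (teval e t1, teval e t2)
  | tpi1 _ _ t1 => fst (teval e t1)
  | tpi2 _ _ t1 => snd (teval e t1)
  end.

Fixpoint sat {A : Type} (e : env A) (phi : formula) : Prop :=
  match phi with
  | fEq t u => teval e t = teval e u
  | fNeq t u => teval e t <> teval e u
  | fTop => True
  | fBot => False
  | fOr p q => sat e p \/ sat e q
  | fAnd p q => sat e p /\ sat e q
  | fAll n T t p => forall a : interp A T, teval e t a -> sat (upd e n T a) p
  | fEx n T t p => exists a : interp A T, teval e t a /\ sat (upd e n T a) p
  end.

Definition entails (Gamma : list formula) (psi : formula) : Prop :=
  forall (A : Type) (e : env A),
    (forall g, In g Gamma -> sat e g) -> sat e psi.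

Fixpoint tFV {T : ty} (t : term T) (v : var) : Prop :=
  match t with
  | tvar n T0 => v = (n, T0)
  | tunit => False
  | tpair _ _ t1 t2 => tFV t1 v \/ tFV t2 v
  | tpi1 _ _ t1 => tFV t1 v
  | tpi2 _ _ t1 => tFV t1 v
  end.

Fixpoint FV (phi : formula) (v : var) : Prop :=
  match phi with
  | fEq t u | fNeq t u => tFV t v \/ tFV u v
  | fTop | fBot => False
  | fOr p q | fAnd p q => FV p v \/ FV q v
  | fAll n T t p | fEx n T t p => tFV t v \/ (FV p v /\ v <> (n, T))
  end.

Definition FVs (Gamma : list formula) (v : var) : Prop :=
  exists g, In g Gamma /\ FV g v.

(* The proof is proof-theoretic, in the style of Maehara.  We work with
   interpolation sequents [Interp PL PR DL DR]: two sides, each with a list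
   of membership facts and a list of formulas read disjunctively, and an
   interpolant theta in their common language such that the left side
   yields "DL or theta" and the right side yields "DR or not theta".

   1. Syntax and semantics toolkit: coincidence, dual negation, renaming,
      normal forms of terms and extensional equivalence (which Delta_0
      formulas respect and can express).
   2. Rules: each rule of a one-sided sequent calculus builds an interpolant
      of its conclusion from interpolants of its premises; by symmetry only
      left rules are needed.  Equations are closed by chains of forced
      equalities crossing between the sides.
   3. Completeness: a fair proof search either closes (giving an
      interpolant) or has an infinite open branch, whose term model
      falsifies every formula on the branch.
   The theorem is the special case DL = not GammaL, DR = not GammaR, psi. *)

From Stdlib Require Import List Arith Lia Bool Relations Classical ClassicalEpsilon
  Eqdep_dec FunctionalExtensionality PropExtensionality.
Import ListNotations.

Definition var_eq_dec : forall v w : var, {v = w} + {v <> w}.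
Proof. decide equality; [apply ty_eq_dec | apply Nat.eq_dec]. Defined.
Arguments var_eq_dec : simpl never.

Lemma upd_same A (e : env A) n T a : upd e n T a n T = a.
Proof.
  unfold upd. destruct (Nat.eq_dec n n) as [_|]; [|congruence].
  destruct (ty_eq_dec T T) as [E|]; [|congruence].
  rewrite (UIP_dec ty_eq_dec E eq_refl). reflexivity.
Qed.

Lemma upd_other A (e : env A) n T a m S :
  (n, T) <> (m, S) -> upd e n T a m S = e m S.
Proof.
  unfold upd. intros H.
  destruct (Nat.eq_dec n m), (ty_eq_dec T S); subst; congruence.
Qed.

Definition agree {A} (P : var -> Prop) (e e' : env A) : Prop :=
  forall n T, P (n, T) -> e n T = e' n T.

Lemma agree_upd A (P : var -> Prop) (e e' : env A) n T a :
  agree (fun v => P v /\ v <> (n, T)) e e' -> agree P (upd e n T a) (upd e' n T a).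
Proof.
  intros H m S Hm. destruct (var_eq_dec (n, T) (m, S)) as [E|E].
  - injection E as -> ->. rewrite !upd_same. reflexivity.
  - rewrite !upd_other by exact E. apply H. split; auto.
Qed.

Lemma upd_shadow A (e : env A) n T a b :
  agree (fun _ => True) (upd (upd e n T b) n T a) (upd e n T a).
Proof.
  intros m S _. destruct (var_eq_dec (n, T) (m, S)) as [E|E].
  - injection E as -> ->. rewrite !upd_same. reflexivity.
  - rewrite !upd_other by exact E. reflexivity.
Qed.

Lemma upd_comm A (e : env A) n T a k S b : (n, T) <> (k, S) ->
  agree (fun _ => True) (upd (upd e n T a) k S b) (upd (upd e k S b) n T a).
Proof.
  intros H m R _. destruct (var_eq_dec (k, S) (m, R)) as [E|E].
  - injection E as -> ->. rewrite upd_same, upd_other, upd_same by exact H. reflexivity.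
  - rewrite (upd_other _ _ k S b) by exact E.
    destruct (var_eq_dec (n, T) (m, R)) as [E'|E'].
    + injection E' as -> ->. rewrite !upd_same. reflexivity.
    + rewrite !upd_other by assumption. reflexivity.
Qed.

Lemma upd_self A (e : env A) n T : agree (fun _ => True) (upd e n T (e n T)) e.
Proof.
  intros m S _. destruct (var_eq_dec (n, T) (m, S)) as [E|E].
  - injection E as -> ->. apply upd_same.
  - apply upd_other, E.
Qed.

Lemma teval_agree A (e e' : env A) T (t : term T) :
  agree (tFV t) e e' -> teval e t = teval e' t.
Proof.
  induction t; simpl; intros H.
  - apply H. reflexivity.
  - reflexivity.
  - rewrite IHt1, IHt2; [reflexivity| |]; intros m R ?; apply H; auto.
  - rewrite IHt; auto.
  - rewrite IHt; auto.
Qed.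

Lemma sat_agree A (phi : formula) : forall (e e' : env A),
  agree (FV phi) e e' -> (sat e phi <-> sat e' phi).
Proof.
  induction phi; simpl; intros e e' H.
  1-2: rewrite (teval_agree _ e e' _ t), (teval_agree _ e e' _ t0);
         [tauto | intros m R ?; apply H; auto ..].
  1-2: tauto.
  1-2: rewrite (IHphi1 e e'), (IHphi2 e e'); [tauto | intros m R ?; apply H; auto ..].
  all: rewrite (teval_agree _ e e' _ t) by (intros m R ?; apply H; auto).
  all: assert (Hb : forall a, sat (upd e n T a) phi <-> sat (upd e' n T a) phi)
         by (intros a; apply IHphi, agree_upd; intros m R ?; apply H; auto).
  all: setoid_rewrite Hb; tauto.
Qed.

Lemma sat_ext A (phi : formula) (e e' : env A) :
  agree (fun _ => True) e e' -> (sat e phi <-> sat e' phi).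
Proof. intros H. apply sat_agree. intros n T _. apply H, I. Qed.

Lemma teval_upd_fresh A (e : env A) n T a S (t : term S) :
  ~ tFV t (n, T) -> teval (upd e n T a) t = teval e t.
Proof.
  intros H. apply teval_agree. intros m R Hm. apply upd_other. congruence.
Qed.

Lemma sat_upd_fresh A (e : env A) n T a phi :
  ~ FV phi (n, T) -> (sat (upd e n T a) phi <-> sat e phi).
Proof.
  intros H. apply sat_agree. intros m R Hm. apply upd_other. congruence.
Qed.

Fixpoint neg (phi : formula) : formula :=
  match phi with
  | fEq t u => fNeq t u
  | fNeq t u => fEq t u
  | fTop => fBot
  | fBot => fTop
  | fOr p q => fAnd (neg p) (neg q)
  | fAnd p q => fOr (neg p) (neg q)
  | fAll n T t p => fEx n T t (neg p)
  | fEx n T t p => fAll n T t (neg p)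
  end.

Lemma sat_neg A (phi : formula) : forall (e : env A), sat e (neg phi) <-> ~ sat e phi.
Proof.
  induction phi; simpl; intros e.
  - tauto.
  - split; [tauto | apply NNPP].
  - tauto.
  - tauto.
  - rewrite IHphi1, IHphi2. tauto.
  - rewrite IHphi1, IHphi2. split; [tauto | apply not_and_or].
  - setoid_rewrite IHphi. split.
    + intros [a [Ha Hn]] Hall. exact (Hn (Hall a Ha)).
    + intros Hn. apply NNPP. intros Hc. apply Hn. intros a Ha.
      apply NNPP. intros Hp. apply Hc. exists a. auto.
  - setoid_rewrite IHphi. firstorder.
Qed.

Lemma FV_neg phi v : FV (neg phi) v <-> FV phi v.
Proof. induction phi; simpl; rewrite ?IHphi1, ?IHphi2, ?IHphi; tauto. Qed.

(* Renaming the free occurrences of the variable (n,T) into (m,T).  The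
   search procedure uses it to instantiate a quantifier by a fresh or an
   already introduced name. *)

Fixpoint tren (n : nat) (T : ty) (m : nat) {S} (t : term S) : term S :=
  match t in term S0 return term S0 with
  | tvar k S0 => if var_eq_dec (k, S0) (n, T) then tvar m S0 else tvar k S0
  | tunit => tunit
  | tpair _ _ a b => tpair _ _ (tren n T m a) (tren n T m b)
  | tpi1 _ _ a => tpi1 _ _ (tren n T m a)
  | tpi2 _ _ a => tpi2 _ _ (tren n T m a)
  end.

Fixpoint ren (n : nat) (T : ty) (m : nat) (phi : formula) : formula :=
  match phi with
  | fEq t u => fEq (tren n T m t) (tren n T m u)
  | fNeq t u => fNeq (tren n T m t) (tren n T m u)
  | fTop => fTop
  | fBot => fBot
  | fOr p q => fOr (ren n T m p) (ren n T m q)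
  | fAnd p q => fAnd (ren n T m p) (ren n T m q)
  | fAll k U t p =>
      fAll k U (tren n T m t) (if var_eq_dec (k, U) (n, T) then p else ren n T m p)
  | fEx k U t p =>
      fEx k U (tren n T m t) (if var_eq_dec (k, U) (n, T) then p else ren n T m p)
  end.

(* Bound variables of a formula; renaming into a name that is not bound
   cannot be captured. *)
Fixpoint bnd (phi : formula) (v : var) : Prop :=
  match phi with
  | fOr p q | fAnd p q => bnd p v \/ bnd q v
  | fAll k U _ p | fEx k U _ p => v = (k, U) \/ bnd p v
  | _ => False
  end.

(* Number of connectives; the measure of the truth lemma. *)
Fixpoint fsize (phi : formula) : nat :=
  match phi with
  | fOr p q | fAnd p q => S (fsize p + fsize q)
  | fAll _ _ _ p | fEx _ _ _ p => S (fsize p)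
  | _ => 0
  end.

Lemma fsize_ren n T m phi : fsize (ren n T m phi) = fsize phi.
Proof. induction phi; simpl; repeat destruct var_eq_dec; simpl; congruence. Qed.

Lemma bnd_ren n T m phi v : bnd (ren n T m phi) v -> bnd phi v.
Proof. induction phi; simpl; repeat destruct var_eq_dec; simpl; tauto. Qed.

Lemma tFV_ren n T m S (t : term S) v :
  tFV (tren n T m t) v -> (tFV t v /\ v <> (n, T)) \/ v = (m, T).
Proof.
  induction t as [k S0| | | |]; simpl; try tauto.
  destruct (var_eq_dec (k, S0) (n, T)) as [E|E]; simpl; intros ->.
  - injection E as -> ->. auto.
  - left. split; congruence.
Qed.

Lemma FV_ren n T m phi v :
  FV (ren n T m phi) v -> (FV phi v /\ v <> (n, T)) \/ v = (m, T).
Proof.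
  induction phi; simpl;
    try (intros [H|H]; apply tFV_ren in H; tauto); try tauto.
  all: intros [H|[H Hne]]; [apply tFV_ren in H; tauto|].
  all: destruct (var_eq_dec (n0, T0) (n, T)) as [E|E];
         [rewrite <- E in *; tauto | apply IHphi in H; tauto].
Qed.

Lemma teval_ren A (e : env A) n T m S (t : term S) :
  teval e (tren n T m t) = teval (upd e n T (e m T)) t.
Proof.
  induction t as [k S0| | | |]; simpl; try congruence.
  destruct (var_eq_dec (k, S0) (n, T)) as [E|E]; simpl.
  - injection E as -> ->. rewrite upd_same. reflexivity.
  - rewrite upd_other by congruence. reflexivity.
Qed.

(* The body of a quantifier under renaming: either the binder shadows (n,T)
   or the renaming goes through, provided the binder is not (m,T). *)
Lemma sat_ren_body A n T m k U p :
  (forall e : env A, sat e (ren n T m p) <-> sat (upd e n T (e m T)) p) ->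
  (k, U) <> (m, T) ->
  forall (e : env A) a,
    sat (upd e k U a) (if var_eq_dec (k, U) (n, T) then p else ren n T m p) <->
    sat (upd (upd e n T (e m T)) k U a) p.
Proof.
  intros IH Hkm e a. destruct (var_eq_dec (k, U) (n, T)) as [E|E].
  - injection E as -> ->. symmetry. apply sat_ext, upd_shadow.
  - rewrite IH, upd_other by congruence. apply sat_ext.
    intros r R _. symmetry. apply upd_comm; [congruence | exact I].
Qed.

Lemma sat_ren A phi : forall (e : env A) n T m, ~ bnd phi (m, T) ->
  (sat e (ren n T m phi) <-> sat (upd e n T (e m T)) phi).
Proof.
  induction phi; simpl; intros e n0 T0 m Hb; rewrite ?teval_ren.
  1-4: tauto.
  1-2: rewrite IHphi1, IHphi2 by tauto; tauto.
  all: setoid_rewrite (sat_ren_body A n0 T0 m n T phi);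
         [tauto | intros; apply IHphi; tauto | intros E; apply Hb; auto].
Qed.

(* Projections are pushed through pairs, so that a
   term denotes a path of projections from a variable, the unit, or a pair of
   normal forms.  Terms with the same normal form have the same value
   ([teval_tnorm_eq]) and some term with that normal form uses only the
   variables of the normal form ([clean_term]); this lets an interpolant
   name a value that both sides can describe. *)

Inductive nterm : Type :=
| NPath : var -> list bool -> nterm
| NUnit : nterm
| NPair : nterm -> nterm -> nterm.

Definition nterm_eq_dec : forall a b : nterm, {a = b} + {a <> b}.
Proof. decide equality; [apply list_eq_dec, bool_dec | apply var_eq_dec]. Defined.

(* Projection on normal forms ([true] is the first projection). *)
Definition nproj (b : bool) (n : nterm) : nterm :=
  match n with
  | NPair x y => if b then x else y
  | NPath v bs => NPath v (bs ++ [b])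
  | NUnit => NUnit
  end.

Fixpoint tnorm {T} (t : term T) : nterm :=
  match t with
  | tvar n T => NPath (n, T) []
  | tunit => NUnit
  | tpair _ _ a b => NPair (tnorm a) (tnorm b)
  | tpi1 _ _ a => nproj true (tnorm a)
  | tpi2 _ _ a => nproj false (tnorm a)
  end.

Fixpoint varsN (n : nterm) (v : var) : Prop :=
  match n with
  | NPath w _ => v = w
  | NUnit => False
  | NPair a b => varsN a v \/ varsN b v
  end.

Lemma varsN_tnorm T (t : term T) v : varsN (tnorm t) v -> tFV t v.
Proof.
  assert (Hp : forall b n, varsN (nproj b n) v -> varsN n v)
    by (intros [] []; simpl; auto).
  induction t; simpl; auto; intros H; try apply Hp in H; tauto.
Qed.

Lemma Some_existT_fst (P : ty -> Type) T U (x : P T) (y : P U) :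
  Some (existT P T x) = Some (existT P U y) -> T = U.
Proof. intros H. exact (f_equal (fun o => match o with Some d => projT1 d | None => T end) H). Qed.

Lemma Some_existT_snd (P : ty -> Type) T (x y : P T) :
  Some (existT P T x) = Some (existT P T y) -> x = y.
Proof.
  intros H. apply (inj_pair2_eq_dec ty ty_eq_dec).
  exact (f_equal (fun o => match o with Some d => d | None => existT P T x end) H).
Qed.

Definition dproj {A} (b : bool) (d : option {T : ty & interp A T})
  : option {T : ty & interp A T} :=
  match d with
  | Some (existT _ (TProd T1 T2) v) =>
      Some (if b then existT _ T1 (fst v) else existT _ T2 (snd v))
  | _ => None
  end.

Fixpoint deval {A} (e : env A) (n : nterm) : option {T : ty & interp A T} :=
  match n with
  | NPath v bs => fold_left (fun o b => dproj b o) bs (Some (existT _ (snd v) (e (fst v) (snd v))))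
  | NUnit => Some (existT _ TUnit tt)
  | NPair a b =>
      match deval e a, deval e b with
      | Some (existT _ T1 v1), Some (existT _ T2 v2) => Some (existT _ (TProd T1 T2) (v1, v2))
      | _, _ => None
      end
  end.

Lemma deval_nproj A (e : env A) n T1 T2 (v : interp A (TProd T1 T2)) b :
  deval e n = Some (existT _ (TProd T1 T2) v) ->
  deval e (nproj b n) = Some (if b then existT _ T1 (fst v) else existT _ T2 (snd v)).
Proof.
  destruct n as [w bs| |x y]; simpl; intros H.
  - rewrite fold_left_app, H. reflexivity.
  - discriminate H.
  - destruct (deval e x) as [[T1' v1]|] eqn:Ex; [|discriminate].
    destruct (deval e y) as [[T2' v2]|] eqn:Ey; [|discriminate].
    pose proof (Some_existT_fst _ _ _ _ _ H) as HT. injection HT as -> ->.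
    apply Some_existT_snd in H. subst v. destruct b; assumption.
Qed.

Lemma deval_tnorm A (e : env A) T (t : term T) :
  deval e (tnorm t) = Some (existT _ T (teval e t)).
Proof.
  induction t; simpl.
  - reflexivity.
  - reflexivity.
  - rewrite IHt1, IHt2. reflexivity.
  - exact (deval_nproj _ _ _ _ _ _ true IHt).
  - exact (deval_nproj _ _ _ _ _ _ false IHt).
Qed.

Lemma teval_tnorm_eq A (e : env A) T (t u : term T) :
  tnorm t = tnorm u -> teval e t = teval e u.
Proof.
  intros H. apply (Some_existT_snd (interp A)).
  rewrite <- !deval_tnorm, H. reflexivity.
Qed.

Definition tproj (b : bool) (d : option {T : ty & term T}) : option {T : ty & term T} :=
  match d with
  | Some (existT _ (TProd T1 T2) w) =>
      Some (if b then existT _ T1 (tpi1 T1 T2 w) else existT _ T2 (tpi2 T1 T2 w))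
  | _ => None
  end.

Fixpoint tbuild (n : nterm) : option {T : ty & term T} :=
  match n with
  | NPath v bs => fold_left (fun o b => tproj b o) bs (Some (existT _ (snd v) (tvar (fst v) (snd v))))
  | NUnit => Some (existT _ TUnit tunit)
  | NPair a b =>
      match tbuild a, tbuild b with
      | Some (existT _ T1 v1), Some (existT _ T2 v2) => Some (existT _ (TProd T1 T2) (tpair T1 T2 v1 v2))
      | _, _ => None
      end
  end.

Lemma tbuild_path_inv v bs : forall T u,
  fold_left (fun o b => tproj b o) bs (Some (existT _ (snd v) (tvar (fst v) (snd v))))
    = Some (existT _ T u) ->
  tnorm u = NPath v bs /\ (forall w, tFV u w -> w = v).
Proof.
  induction bs as [|b bs IH] using rev_ind; simpl; intros T u H.
  - pose proof (Some_existT_fst _ _ _ _ _ H) as <-. apply Some_existT_snd in H as <-.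
    destruct v. simpl. auto.
  - rewrite fold_left_app in H. simpl in H.
    destruct (fold_left (fun o b => tproj b o) bs _) as [[[| |T1 T2|] w]|] eqn:E;
      try discriminate.
    destruct (IH _ _ eq_refl) as [H1 H2].
    destruct b; pose proof (Some_existT_fst _ _ _ _ _ H) as <-;
      apply Some_existT_snd in H as <-; simpl; rewrite H1; auto.
Qed.

Lemma tbuild_inv n : forall T u, tbuild n = Some (existT _ T u) ->
  tnorm u = n /\ (forall w, tFV u w -> varsN n w).
Proof.
  induction n as [v bs| |x IHx y IHy]; simpl; intros T u H.
  - exact (tbuild_path_inv v bs T u H).
  - pose proof (Some_existT_fst _ _ _ _ _ H) as <-. apply Some_existT_snd in H as <-.
    simpl. auto.
  - destruct (tbuild x) as [[T1 v1]|]; [|discriminate].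
    destruct (tbuild y) as [[T2 v2]|]; [|discriminate].
    destruct (IHx _ _ eq_refl) as [Hx1 Hx2]. destruct (IHy _ _ eq_refl) as [Hy1 Hy2].
    pose proof (Some_existT_fst _ _ _ _ _ H) as <-. apply Some_existT_snd in H as <-.
    simpl. rewrite Hx1, Hy1. split; [reflexivity|]. intros w [Hw|Hw]; auto.
Qed.

Lemma tbuild_tnorm T (t : term T) : exists u, tbuild (tnorm t) = Some (existT _ T u).
Proof.
  assert (Hproj : forall n T1 T2 (w : term (TProd T1 T2)) b,
             tbuild n = Some (existT _ (TProd T1 T2) w) ->
             exists u, tbuild (nproj b n) = Some (existT _ (if b then T1 else T2) u)).
  { intros [v bs| |x y] T1 T2 w b H; simpl in H |- *.
    - rewrite fold_left_app, H. destruct b; eexists; reflexivity.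
    - discriminate H.
    - destruct (tbuild x) as [[T1' v1]|] eqn:Ex; [|discriminate].
      destruct (tbuild y) as [[T2' v2]|] eqn:Ey; [|discriminate].
      pose proof (Some_existT_fst _ _ _ _ _ H) as HT. injection HT as -> ->.
      destruct b; eexists; eassumption. }
  induction t; simpl.
  - eexists; reflexivity.
  - eexists; reflexivity.
  - destruct IHt1 as [u1 ->], IHt2 as [u2 ->]. eexists; reflexivity.
  - destruct IHt as [w H]. exact (Hproj _ _ _ _ true H).
  - destruct IHt as [w H]. exact (Hproj _ _ _ _ false H).
Qed.

Lemma clean_term T (t : term T) : exists u : term T,
  tnorm u = tnorm t /\ (forall w, tFV u w -> varsN (tnorm t) w) /\
  (forall A (e : env A), teval e u = teval e t).
Proof.
  destruct (tbuild_tnorm T t) as [u H]. apply tbuild_inv in H as [H1 H2].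
  exists u. split; [|split]; auto. intros; apply teval_tnorm_eq; auto.
Qed.

(* Delta_0 formulas cannot
   distinguish equivalent values ([sat_eqv]), and equivalence is itself
   Delta_0 definable ([EqvF]); hence so is "x is equivalent to a member of
   u" ([Mem]), which an interpolant uses to speak about membership. *)

Fixpoint eqv {A} (T : ty) : interp A T -> interp A T -> Prop :=
  match T return interp A T -> interp A T -> Prop with
  | TUr => fun a b => a = b
  | TUnit => fun _ _ => True
  | TProd T1 T2 => fun a b => eqv T1 (fst a) (fst b) /\ eqv T2 (snd a) (snd b)
  | TSet T1 => fun a b => (forall x, a x -> exists y, b y /\ eqv T1 x y) /\
                         (forall y, b y -> exists x, a x /\ eqv T1 x y)
  end.

Lemma eqv_refl A T : forall (a : interp A T), eqv T a a.
Proof.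
  induction T; simpl; auto.
  intros a. split; intros x Hx; exists x; auto.
Qed.

Definition eqv_env {A} (e e' : env A) : Prop := forall n T, eqv T (e n T) (e' n T).

Lemma eqv_env_refl A (e : env A) : eqv_env e e.
Proof. intros n T. apply eqv_refl. Qed.

Lemma teval_eqv A (e e' : env A) T (t : term T) :
  eqv_env e e' -> eqv T (teval e t) (teval e' t).
Proof. intros H. induction t; simpl; auto; try split; apply IHt. Qed.

Lemma eqv_env_upd A (e e' : env A) n T a a' :
  eqv_env e e' -> eqv T a a' -> eqv_env (upd e n T a) (upd e' n T a').
Proof.
  intros H Ha m S. destruct (var_eq_dec (n, T) (m, S)) as [E|E].
  - injection E as -> ->. rewrite !upd_same. exact Ha.
  - rewrite !upd_other by exact E. apply H.
Qed.

Lemma sat_eqv A phi : forall (e e' : env A), eqv_env e e' -> sat e phi -> sat e' phi.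
Proof.
  induction phi; simpl; intros e e' H.
  1-2: pose proof (teval_eqv _ _ _ _ t H); pose proof (teval_eqv _ _ _ _ t0 H);
       simpl in *; congruence.
  1-2: auto.
  - intros [Hp|Hq]; [left; eapply IHphi1 | right; eapply IHphi2]; eauto.
  - intros [Hp Hq]; split; [eapply IHphi1 | eapply IHphi2]; eauto.
  - intros Hall a' Ha'. destruct (teval_eqv _ _ _ _ t H) as [_ H2].
    destruct (H2 a' Ha') as [x [Hx Hxa]].
    eapply IHphi; [|apply Hall, Hx]. apply eqv_env_upd; auto.
  - intros [a [Ha Hp]]. destruct (teval_eqv _ _ _ _ t H) as [H1 _].
    destruct (H1 a Ha) as [y [Hy Hay]]. exists y. split; auto.
    eapply IHphi; [|exact Hp]. apply eqv_env_upd; auto.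
Qed.

(* [EqvF T k a b] expresses [eqv T a b], using bound variables >= k. *)
Fixpoint EqvF (T : ty) (k : nat) : term T -> term T -> formula :=
  match T return term T -> term T -> formula with
  | TUr => fun a b => fEq a b
  | TUnit => fun _ _ => fTop
  | TProd T1 T2 => fun a b => fAnd (EqvF T1 k (tpi1 T1 T2 a) (tpi1 T1 T2 b))
                                  (EqvF T2 k (tpi2 T1 T2 a) (tpi2 T1 T2 b))
  | TSet T1 => fun a b =>
      fAnd (fAll k T1 a (fEx (S k) T1 b (EqvF T1 (S (S k)) (tvar k T1) (tvar (S k) T1))))
           (fAll k T1 b (fEx (S k) T1 a (EqvF T1 (S (S k)) (tvar (S k) T1) (tvar k T1))))
  end.

Lemma EqvF_sem T : forall k (a b : term T) A (e : env A),
  (forall v, tFV a v \/ tFV b v -> fst v < k) ->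
  (sat e (EqvF T k a b) <-> eqv T (teval e a) (teval e b)).
Proof.
  induction T; intros k a b A e Hk; simpl.
  1-2: tauto.
  - rewrite IHT1, IHT2 by (simpl; auto). simpl. tauto.
  - assert (HI : forall x y, sat (upd (upd e k T x) (S k) T y)
                   (EqvF T (S (S k)) (tvar k T) (tvar (S k) T)) <-> eqv T x y).
    { intros x y. rewrite IHT by (simpl; intros v [-> | ->]; simpl; lia). simpl.
      rewrite upd_same, upd_other, upd_same by (intro E; injection E; lia). tauto. }
    assert (HI' : forall x y, sat (upd (upd e k T x) (S k) T y)
                   (EqvF T (S (S k)) (tvar (S k) T) (tvar k T)) <-> eqv T y x).
    { intros x y. rewrite IHT by (simpl; intros v [-> | ->]; simpl; lia). simpl.
      rewrite upd_same, upd_other, upd_same by (intro E; injection E; lia). tauto. }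
    assert (Hfresh : forall (c : term (TSet T)) x,
               (forall v, tFV c v -> fst v < k) -> teval (upd e k T x) c = teval e c).
    { intros c x Hc. apply teval_upd_fresh. intros Hv. specialize (Hc _ Hv). simpl in Hc. lia. }
    assert (Ha : forall x y, teval (upd e k T x) a y <-> teval e a y)
      by (intros x y; rewrite Hfresh; [tauto | intros v Hv; apply Hk; auto]).
    assert (Hb : forall x y, teval (upd e k T x) b y <-> teval e b y)
      by (intros x y; rewrite Hfresh; [tauto | intros v Hv; apply Hk; auto]).
    setoid_rewrite Ha. setoid_rewrite Hb. setoid_rewrite HI. setoid_rewrite HI'. tauto.
Qed.

Lemma FV_EqvF T : forall k (a b : term T) v, FV (EqvF T k a b) v -> tFV a v \/ tFV b v.
Proof.
  induction T; intros k a b v; simpl; try tauto.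
  - intros [H|H]; [apply IHT1 in H | apply IHT2 in H]; simpl in H; tauto.
  - intros [[H|[[H|[H1 H2]] H3]]|[H|[[H|[H1 H2]] H3]]]; auto;
      apply IHT in H1; simpl in H1; destruct H1; subst; congruence.
Qed.

Definition Mem (m : nat) (T : ty) (u : term (TSet T)) : formula :=
  fEx (S m) T u (EqvF T (S (S m)) (tvar m T) (tvar (S m) T)).

Lemma Mem_sem A (e : env A) m T u :
  sat e (Mem m T u) <-> exists a, teval e u a /\ eqv T (e m T) a.
Proof.
  unfold Mem; simpl. setoid_rewrite EqvF_sem; [| simpl; intros v [-> | ->]; simpl; lia ..].
  simpl. setoid_rewrite upd_same. setoid_rewrite upd_other; [tauto|].
  intros E; injection E; lia.
Qed.

Lemma FV_Mem m T u v : FV (Mem m T u) v -> tFV u v \/ v = (m, T).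
Proof.
  unfold Mem; simpl. intros [H|[H1 H2]]; auto. apply FV_EqvF in H1. simpl in H1.
  destruct H1; subst; auto. congruence.
Qed.

(* A fact [mkFact s m T t] records that the
   variable (m,T) was introduced by side [s] as an element of [t]. *)

Record fact : Type := mkFact { fside : bool; fm : nat; fT : ty; ft : term (TSet fT) }.

Definition fsat {A} (e : env A) (f : fact) : Prop := teval e (ft f) (e (fm f) (fT f)).
Definition fvars (f : fact) (v : var) : Prop := v = (fm f, fT f) \/ tFV (ft f) v.

Definition factsat {A} (e : env A) (P : list fact) : Prop := forall f, In f P -> fsat e f.
Definition somesat {A} (e : env A) (D : list formula) : Prop :=
  exists phi, In phi D /\ sat e phi.

Definition Lang (P : list fact) (D : list formula) (v : var) : Prop :=
  (exists phi, In phi D /\ FV phi v) \/ (exists f, In f P /\ fvars f v).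

Definition in_common (PL PR : list fact) (DL DR : list formula) (theta : formula) : Prop :=
  forall v, FV theta v -> Lang PL DL v /\ Lang PR DR v.

Definition Interp (PL PR : list fact) (DL DR : list formula) : Prop :=
  exists theta : formula,
    in_common PL PR DL DR theta /\
    (forall A (e : env A), factsat e PL -> somesat e DL \/ sat e theta) /\
    (forall A (e : env A), factsat e PR -> somesat e DR \/ ~ sat e theta).

Lemma Lang_form P D phi v : In phi D -> FV phi v -> Lang P D v.
Proof. intros; left; eauto. Qed.

Lemma Lang_fact P D f v : In f P -> fvars f v -> Lang P D v.
Proof. intros; right; eauto. Qed.

Lemma fsat_upd_fresh A (e : env A) n T a f :
  ~ fvars f (n, T) -> (fsat (upd e n T a) f <-> fsat e f).
Proof.
  intros H. unfold fsat. rewrite teval_upd_fresh by (intro; apply H; right; auto).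
  rewrite upd_other by (intro E; apply H; left; auto). tauto.
Qed.

Lemma factsat_upd_fresh A (e : env A) P D n T a :
  ~ Lang P D (n, T) -> factsat e P -> factsat (upd e n T a) P.
Proof.
  intros Hn HP f Hf. apply fsat_upd_fresh; [|auto]. intros Hv. apply Hn. right; eauto.
Qed.

Lemma somesat_upd_fresh A (e : env A) P D n T a :
  ~ Lang P D (n, T) -> somesat (upd e n T a) D -> somesat e D.
Proof.
  intros Hn [phi [Hphi Hs]]. exists phi. split; auto.
  apply sat_upd_fresh in Hs; auto. intros Hv. apply Hn. left; eauto.
Qed.

(* Interpolation is symmetric: swap the sides and negate the interpolant. *)
Lemma Interp_swap PL PR DL DR : Interp PR PL DR DL -> Interp PL PR DL DR.
Proof.
  intros [th [Hfv [H1 H2]]]. exists (neg th). split; [|split].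
  - intros v Hv. rewrite FV_neg in Hv. destruct (Hfv v Hv); auto.
  - intros A e HP. rewrite sat_neg. apply H2, HP.
  - intros A e HP. rewrite sat_neg. destruct (H1 A e HP); tauto.
Qed.

Lemma Interp_weaken PL PR DL DR PL' PR' DL' DR' :
  incl PL PL' -> incl PR PR' -> incl DL DL' -> incl DR DR' ->
  Interp PL PR DL DR -> Interp PL' PR' DL' DR'.
Proof.
  intros HPL HPR HDL HDR [th [Hfv [H1 H2]]].
  assert (HLang : forall P P' D D' v, incl P P' -> incl D D' -> Lang P D v -> Lang P' D' v)
    by (intros P P' D D' v HP HD [[p [Hp Hq]]|[f [Hf Hg]]]; [left|right]; eauto).
  assert (Hsome : forall A (e : env A) D D', incl D D' -> somesat e D -> somesat e D')
    by (intros A e D D' HD [p [Hp Hq]]; exists p; auto).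
  exists th. split; [|split].
  - intros v Hv. destruct (Hfv v Hv). split; eapply HLang; eauto.
  - intros A e HP. destruct (H1 A e); [intros f Hf; auto | left; eauto | auto].
  - intros A e HP. destruct (H2 A e); [intros f Hf; auto | left; eauto | auto].
Qed.

Lemma Interp_replace_L PL PR DL DL' DR :
  (forall v, Lang PL DL' v -> Lang PL DL v) ->
  (forall A (e : env A), factsat e PL -> somesat e DL' -> somesat e DL) ->
  Interp PL PR DL' DR -> Interp PL PR DL DR.
Proof.
  intros HL Hs [th [Hfv [H1 H2]]]. exists th. split; [|split]; auto.
  - intros v Hv. destruct (Hfv v Hv). auto.
  - intros A e HP. destruct (H1 A e HP); auto.
Qed.

Lemma rule_top_L PL PR DL DR : In fTop DL -> Interp PL PR DL DR.
Proof.
  intros H. exists fBot. split; [|split]; simpl; try tauto.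
  - intros v [].
  - intros A e _. left. exists fTop. simpl; auto.
Qed.

Lemma rule_or_L PL PR DL DR a b : In (fOr a b) DL ->
  Interp PL PR (a :: b :: DL) DR -> Interp PL PR DL DR.
Proof.
  intros Hin. apply Interp_replace_L.
  - intros v [[p [[<-|[<-|Hp]] Hv]]|Hv];
      [eapply Lang_form; eauto; simpl; auto .. | left; eauto | right; auto].
  - intros A e _ [p [[<-|[<-|Hp]] Hs]]; [exists (fOr a b) .. | exists p];
      simpl; auto.
Qed.

Lemma rule_and_L PL PR DL DR a b : In (fAnd a b) DL ->
  Interp PL PR (a :: DL) DR -> Interp PL PR (b :: DL) DR -> Interp PL PR DL DR.
Proof.
  intros Hin [th1 [Hfv1 [H11 H12]]] [th2 [Hfv2 [H21 H22]]].
  assert (HL : forall c, (forall v, FV c v -> FV (fAnd a b) v) ->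
                forall v, Lang PL (c :: DL) v -> Lang PL DL v)
    by (intros c Hc v [[p [[<-|Hp] Hv]]|Hv]; [eapply Lang_form; eauto | left; eauto | right; auto]).
  exists (fOr th1 th2). split; [|split].
  - intros v [Hv|Hv]; [destruct (Hfv1 v Hv) | destruct (Hfv2 v Hv)]; split; auto;
      (eapply HL; [| eassumption]; simpl; auto).
  - intros A e HP. simpl.
    destruct (H11 A e HP) as [[p [[<-|Hp] Hq]]|?]; [| left; exists p; auto | auto].
    destruct (H21 A e HP) as [[p' [[<-|Hp'] Hq']]|?]; [| left; exists p'; auto | auto].
    left. exists (fAnd a b). simpl. auto.
  - intros A e HP. simpl. destruct (H12 A e HP); auto. destruct (H22 A e HP); tauto.
Qed.

Lemma rule_all_L PL PR DL DR n T t p m s :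
  In (fAll n T t p) DL -> ~ Lang PL DL (m, T) -> ~ Lang PR DR (m, T) -> ~ bnd p (m, T) ->
  Interp (mkFact s m T t :: PL) PR (ren n T m p :: DL) DR -> Interp PL PR DL DR.
Proof.
  intros Hin HfL HfR Hb [th [Hfv [H1 H2]]].
  assert (HinL : forall v, FV (fAll n T t p) v -> Lang PL DL v) by (intros; eapply Lang_form; eauto).
  exists th. split; [|split]; auto.
  - intros v Hv. destruct (Hfv v Hv) as [HL HR]. split; auto.
    assert (Hvm : v <> (m, T)) by (intros ->; auto).
    destruct HL as [[q [[<-|Hq] Hq2]]|[f [[<-|Hf] Hf2]]].
    + apply FV_ren in Hq2 as [[? ?]|?]; [apply HinL; simpl; auto | congruence].
    + left; eauto.
    + destruct Hf2 as [?|?]; [simpl in *; congruence | apply HinL; simpl; auto].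
    + right; eauto.
  - intros A e HP. destruct (classic (somesat e DL)) as [Hs|Hs]; auto.
    destruct (classic (sat e th)) as [Ht|Ht]; auto. exfalso. apply Hs.
    exists (fAll n T t p). split; auto. simpl. intros a Ha.
    assert (HP' : factsat (upd e m T a) (mkFact s m T t :: PL)).
    { intros f [<-|Hf].
      - unfold fsat; simpl. rewrite upd_same, teval_upd_fresh; auto.
        intros Hv. apply HfL, HinL. simpl; auto.
      - apply (factsat_upd_fresh _ _ _ _ _ _ _ HfL HP), Hf. }
    destruct (H1 A _ HP') as [[q [[<-|Hq] Hq2]]|Ht'].
    + apply sat_ren in Hq2; auto. rewrite upd_same in Hq2.
      eapply sat_agree; [|exact Hq2]. apply agree_upd. intros k S [Hk Hne].
      symmetry. apply upd_other. intros E. apply HfL. rewrite E. apply HinL. simpl. auto.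
    + exfalso; apply Hs. eapply somesat_upd_fresh; [exact HfL | exists q; eauto].
    + exfalso; apply Ht. apply sat_upd_fresh in Ht'; auto.
      intros Hv. apply HfR, (Hfv _ Hv).
Qed.

Lemma rule_ex_same_L PL PR DL DR n T t p m s t' :
  In (fEx n T t p) DL -> In (mkFact s m T t') PL -> tnorm t' = tnorm t -> ~ bnd p (m, T) ->
  Interp PL PR (ren n T m p :: DL) DR -> Interp PL PR DL DR.
Proof.
  intros Hin Hf Hk Hb. apply Interp_replace_L.
  - intros v [[q [[<-|Hq] Hv]]|Hv]; [| left; eauto | right; auto].
    apply FV_ren in Hv as [[? ?]| ->].
    + eapply Lang_form; eauto. simpl; auto.
    + eapply Lang_fact; eauto. left; reflexivity.
  - intros A e HP [q [[<-|Hq] Hs]]; [| exists q; auto].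
    exists (fEx n T t p). split; auto. simpl. exists (e m T). split.
    + rewrite <- (teval_tnorm_eq _ e _ _ _ Hk). apply (HP _ Hf).
    + apply sat_ren in Hs; auto.
Qed.

(* Existential quantifier instantiated by a name (m,T) that the OTHER side
   knows to be an element of t.  The interpolant must transmit this
   membership through a term u denoting t in the common language; there are
   two cases, according to whether the left side already speaks of (m,T). *)

Section CrossInstance.
Variables (PL PR : list fact) (DL DR : list formula).
Variables (n m : nat) (T : ty) (t u : term (TSet T)) (p : formula).
Hypothesis Hin : In (fEx n T t p) DL.
Hypothesis Hb : ~ bnd p (m, T).
Hypothesis Hu_common : forall v, tFV u v -> Lang PL DL v /\ Lang PR DR v.
Hypothesis Hu_val : forall A (e : env A), teval e u = teval e t.
Hypothesis Hm_right : Lang PR DR (m, T).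
Hypothesis Hm_elem : forall A (e : env A), factsat e PR -> teval e u (e m T).

Let HexL : forall v, FV (fEx n T t p) v -> Lang PL DL v.
Proof. intros; eapply Lang_form; eauto. Qed.

(* (m,T) is known on the left: interpolate with "x_m is not in u, or theta". *)
Lemma cross_known :
  Lang PL DL (m, T) -> Interp PL PR (ren n T m p :: DL) DR -> Interp PL PR DL DR.
Proof.
  intros HmL [th [Hfv [H1 H2]]].
  exists (fOr (neg (Mem m T u)) th). split; [|split].
  - intros v [Hv|Hv].
    + apply FV_neg, FV_Mem in Hv as [Hv| ->]; auto.
    + destruct (Hfv v Hv) as [HL HR]. split; auto.
      destruct HL as [[q [[<-|Hq] Hq2]]|?]; [| left; eauto | right; auto].
      apply FV_ren in Hq2 as [[? ?]| ->]; [apply HexL; simpl|]; auto.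
  - intros A e HP. destruct (classic (somesat e DL)) as [Hs|Hs]; auto. right.
    cbn [sat]. rewrite sat_neg, Mem_sem.
    destruct (H1 A e HP) as [[q [[<-|Hq] Hq2]]|?]; [| exfalso; apply Hs; eexists; eauto | auto].
    left. intros [a [Ha Hea]]. apply Hs. exists (fEx n T t p). split; auto.
    simpl. exists a. split; [rewrite <- (Hu_val A e); auto|].
    apply sat_ren in Hq2; auto. eapply sat_eqv; [|exact Hq2].
    apply eqv_env_upd; [apply eqv_env_refl | exact Hea].
  - intros A e HP. destruct (H2 A e HP); auto. right.
    cbn [sat]. rewrite sat_neg, Mem_sem.
    intros [HM|HM]; auto. apply HM. exists (e m T). split; auto. apply eqv_refl.
Qed.

(* (m,T) is fresh for the left: interpolate with "theta for every x_m in u". *)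
Lemma cross_fresh :
  ~ Lang PL DL (m, T) -> Interp PL PR (ren n T m p :: DL) DR -> Interp PL PR DL DR.
Proof.
  intros HmL [th [Hfv [H1 H2]]].
  exists (fAll m T u th). split; [|split].
  - intros v [Hv|[Hv Hne]]; auto.
    destruct (Hfv v Hv) as [HL HR]. split; auto.
    destruct HL as [[q [[<-|Hq] Hq2]]|?]; [| left; eauto | right; auto].
    apply FV_ren in Hq2 as [[? ?]| ->]; [apply HexL; simpl; auto | congruence].
  - intros A e HP. destruct (classic (somesat e DL)) as [Hs|Hs]; auto. right. simpl.
    intros a Ha.
    destruct (H1 A _ (factsat_upd_fresh _ _ _ _ _ _ a HmL HP)) as [[q [[<-|Hq] Hq2]]|?]; auto.
    + exfalso. apply Hs. exists (fEx n T t p). split; auto. simpl. exists a.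
      split; [rewrite <- (Hu_val A e); auto|].
      apply sat_ren in Hq2; auto. rewrite upd_same in Hq2.
      eapply sat_agree; [|exact Hq2]. apply agree_upd. intros k S [Hk Hne].
      symmetry. apply upd_other. intros E. apply HmL. rewrite E. apply HexL. simpl. auto.
    + exfalso. apply Hs. eapply somesat_upd_fresh; [exact HmL | exists q; eauto].
  - intros A e HP. destruct (H2 A e HP); auto. right. simpl. intros Hall.
    specialize (Hall (e m T) (Hm_elem A e HP)).
    rewrite (sat_ext _ th _ e (upd_self _ e m T)) in Hall. auto.
Qed.

End CrossInstance.

Lemma rule_ex_cross_L PL PR DL DR n T t p m s t' :
  In (fEx n T t p) DL -> In (mkFact s m T t') PR -> tnorm t' = tnorm t -> ~ bnd p (m, T) ->
  Interp PL PR (ren n T m p :: DL) DR -> Interp PL PR DL DR.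
Proof.
  intros Hin Hf Hk Hb.
  destruct (clean_term _ t) as [u [Hu1 [Hu2 Hu3]]].
  assert (Hu_common : forall v, tFV u v -> Lang PL DL v /\ Lang PR DR v).
  { intros v Hv. apply Hu2 in Hv. split.
    - apply varsN_tnorm in Hv. eapply Lang_form; eauto. simpl; auto.
    - rewrite <- Hk in Hv. apply varsN_tnorm in Hv. eapply Lang_fact; eauto. right; exact Hv. }
  assert (Hm_right : Lang PR DR (m, T)) by (eapply Lang_fact; eauto; left; reflexivity).
  assert (Hm_elem : forall A (e : env A), factsat e PR -> teval e u (e m T)).
  { intros A e HP. rewrite Hu3, <- (teval_tnorm_eq _ e _ _ _ Hk). apply (HP _ Hf). }
  destruct (classic (Lang PL DL (m, T))) as [HmL|HmL].
  - exact (cross_known PL PR DL DR n m T t u p Hin Hb Hu_common Hu3 Hm_right Hm_elem HmL).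
  - exact (cross_fresh PL PR DL DR n m T t u p Hin Hb Hu_common Hu3 Hm_elem HmL).
Qed.

(* In a countermodel all formulas of DL and DR
   are false, so each disequation "t <> u" of either side forces t = u.  If
   such forced equalities chain the two sides of an equation t0 = u0 of DL,
   the sequent has an interpolant: walking along the chain, the left-hand
   segments are justified by DL alone and each maximal right-hand segment,
   from a to c, is summarised in theta by the common disequation a <> c. *)

Definition diseq_edge (D : list formula) (a b : nterm) : Prop :=
  exists t u, In (fNeq t u) D /\ ((a = tnorm t /\ b = tnorm u) \/ (a = tnorm u /\ b = tnorm t)).

Definition edge2 (DL DR : list formula) (a b : nterm) : Prop :=
  diseq_edge DL a b \/ diseq_edge DR a b.

Definition atom_key (D : list formula) (c : nterm) : Prop :=
  exists t u, (In (fEq t u) D \/ In (fNeq t u) D) /\ (c = tnorm t \/ c = tnorm u).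

Definition valeq {A} (e : env A) (a b : nterm) : Prop :=
  forall ua ub : term TUr, tnorm ua = a -> tnorm ub = b -> teval e ua = teval e ub.

Definition allfalse {A} (e : env A) (D : list formula) : Prop :=
  forall phi, In phi D -> ~ sat e phi.

Lemma valeq_trans A (e : env A) a b c : (exists w : term TUr, tnorm w = b) ->
  valeq e a b -> valeq e b c -> valeq e a c.
Proof. intros [w Hw] H1 H2 ua uc Ha Hc. rewrite (H1 ua w), (H2 w uc); auto. Qed.

Lemma edge_valeq A (e : env A) D a b : diseq_edge D a b -> allfalse e D -> valeq e a b.
Proof.
  intros [t [u [Hin Hab]]] Hall ua ub Ha Hb.
  assert (E : teval e t = teval e u) by (apply NNPP, (Hall _ Hin)).
  destruct Hab as [[-> ->]|[-> ->]];
    [rewrite (teval_tnorm_eq _ e _ ua t), (teval_tnorm_eq _ e _ ub u)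
    | rewrite (teval_tnorm_eq _ e _ ua u), (teval_tnorm_eq _ e _ ub t)]; auto.
Qed.

Lemma edge_key D a b : diseq_edge D a b -> atom_key D a /\ atom_key D b.
Proof.
  intros [t [u [Hin [[-> ->]|[-> ->]]]]]; split; exists t, u; auto.
Qed.

Lemma atom_key_lang P D c v : atom_key D c -> varsN c v -> Lang P D v.
Proof.
  intros [t [u [Hin Hc]]] Hv.
  destruct Hc as [->| ->]; apply varsN_tnorm in Hv;
    destruct Hin; (eapply Lang_form; [eassumption | simpl; auto]).
Qed.

Lemma atom_key_term D c : atom_key D c ->
  exists u : term TUr, tnorm u = c /\ (forall v, tFV u v -> varsN c v).
Proof.
  intros [t [u [_ Hc]]].
  assert (Hw : exists w : term TUr, tnorm w = c) by (destruct Hc; eauto).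
  destruct Hw as [w <-]. destruct (clean_term _ w) as [u' [H1 [H2 _]]]. eauto.
Qed.

Section EquationChain.
Variables (PL PR : list fact) (DL DR : list formula) (k0 : nterm).

(* The chain from k0 currently ends at the left key c. *)
Definition chain_left (c : nterm) : Prop :=
  exists th, in_common PL PR DL DR th /\ atom_key DL c /\
    (forall A (e : env A), allfalse e DL -> ~ sat e th -> valeq e k0 c) /\
    (forall A (e : env A), allfalse e DR -> ~ sat e th).

(* The chain left the left side at the common key a and continued to c
   using right edges only. *)
Definition chain_right (c : nterm) : Prop :=
  exists th a, in_common PL PR DL DR th /\ atom_key DL a /\ atom_key DR a /\ atom_key DR c /\
    (forall A (e : env A), allfalse e DL -> ~ sat e th -> valeq e k0 a) /\
    (forall A (e : env A), allfalse e DR -> ~ sat e th) /\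
    (forall A (e : env A), allfalse e DR -> valeq e a c).

(* Returning to the left side records the right segment as "a <> c". *)
Lemma chain_return c : atom_key DL c -> chain_right c -> chain_left c.
Proof.
  intros HcL [th [a [Hc [HaL [HaR [HcR [H1 [H2 H3]]]]]]]].
  destruct (atom_key_term _ _ HaL) as [ua [Hua Hua_vars]].
  destruct (atom_key_term _ _ HcL) as [uc [Huc Huc_vars]].
  exists (fOr th (fNeq ua uc)). split; [|split; [|split]]; auto.
  - intros v [Hv|[Hv|Hv]]; [apply Hc; auto | apply Hua_vars in Hv | apply Huc_vars in Hv];
      split; eauto using atom_key_lang.
  - intros A e HL Hn. simpl in Hn.
    assert (Hac : teval e ua = teval e uc) by (apply NNPP; tauto).
    apply valeq_trans with a; [exists ua; auto | apply H1; tauto |].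
    intros wa wc Hwa Hwc. rewrite (teval_tnorm_eq _ e _ wa ua), Hac, (teval_tnorm_eq _ e _ uc wc);
      congruence.
  - intros A e HR. simpl. intros [Hs|Hs]; [exact (H2 A e HR Hs)|].
    apply Hs, (H3 A e HR); auto.
Qed.
Lemma chain_step c d :
  (chain_left c \/ chain_right c) -> edge2 DL DR c d -> (chain_left d \/ chain_right d).
Proof.
  intros HI He.
  assert (Hleft : chain_left c -> diseq_edge DL c d -> chain_left d).
  { intros [th [Hc [HcL [H1 H2]]]] HE. destruct (edge_key _ _ _ HE) as [_ HdL].
    exists th. split; [|split; [|split]]; auto.
    intros A e HL Hn. apply valeq_trans with c.
    - destruct (atom_key_term _ _ HcL) as [w [Hw _]]. eauto.
    - auto.
    - eapply edge_valeq; eauto. }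
  destruct HI as [HI|HI], He as [HE|HE].
  - left; auto.
  - right. destruct HI as [th [Hc [HcL [H1 H2]]]]. destruct (edge_key _ _ _ HE) as [HcR HdR].
    exists th, c. do 6 (split; auto). intros A e HR. eapply edge_valeq; eauto.
  - left. apply Hleft; auto. apply chain_return; auto. apply (edge_key _ _ _ HE).
  - right. destruct HI as [th [a [Hc [HaL [HaR [HcR [H1 [H2 H3]]]]]]]].
    destruct (edge_key _ _ _ HE) as [_ HdR].
    exists th, a. do 6 (split; auto). intros A e HR. apply valeq_trans with c.
    + destruct (atom_key_term _ _ HcR) as [w [Hw _]]. eauto.
    + auto.
    + eapply edge_valeq; eauto.
Qed.

End EquationChain.

Lemma rule_eq_L PL PR DL DR t0 u0 :
  In (fEq t0 u0) DL -> clos_refl_trans _ (edge2 DL DR) (tnorm t0) (tnorm u0) ->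
  Interp PL PR DL DR.
Proof.
  intros Hin Hc. apply clos_rt_rtn1 in Hc.
  assert (Hkey : forall c, c = tnorm t0 \/ c = tnorm u0 -> atom_key DL c)
    by (intros c Hc'; exists t0, u0; auto).
  assert (Hchain : forall d, clos_refl_trans_n1 _ (edge2 DL DR) (tnorm t0) d ->
             chain_left PL PR DL DR (tnorm t0) d \/ chain_right PL PR DL DR (tnorm t0) d).
  { intros d H. induction H as [|c d He _ IH].
    - left. exists fBot. split; [|split; [|split]].
      + intros v [].
      + apply Hkey; auto.
      + intros A e _ _ ua ub H1 H2. apply teval_tnorm_eq; congruence.
      + intros; simpl; auto.
    - eapply chain_step; eauto. }
  assert (HA : chain_left PL PR DL DR (tnorm t0) (tnorm u0)).
  { destruct (Hchain _ Hc) as [HA|HB]; auto. apply chain_return; auto. }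
  destruct HA as [th [Hcm [_ [H1 H2]]]].
  exists th. split; [|split]; auto.
  - intros A e _. destruct (classic (somesat e DL)) as [Hs|Hs]; auto.
    destruct (classic (sat e th)) as [Ht|Ht]; auto. exfalso.
    assert (HL : allfalse e DL) by (intros phi Hp Hsat; apply Hs; exists phi; auto).
    apply (HL _ Hin). simpl. apply (H1 A e HL Ht); auto.
  - intros A e _. destruct (classic (somesat e DR)) as [Hs|Hs]; auto.
    right. apply H2. intros phi Hp Hsat; apply Hs; exists phi; auto.
Qed.

Lemma edge2_chain_sym DL DR a b : clos_refl_trans _ (edge2 DL DR) a b ->
  clos_refl_trans _ (edge2 DL DR) b a.
Proof.
  assert (Hsym : forall D a b, diseq_edge D a b -> diseq_edge D b a)
    by (intros D x y [t [u [H [[? ?]|[? ?]]]]]; exists t, u; auto).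
  induction 1 as [x y [H|H]| |]; [apply rt_step; left; auto | apply rt_step; right; auto
    | apply rt_refl | eapply rt_trans; eauto].
Qed.

Lemma edge2_chain_swap DL DR a b : clos_refl_trans _ (edge2 DL DR) a b ->
  clos_refl_trans _ (edge2 DR DL) a b.
Proof.
  induction 1 as [x y H| |]; [apply rt_step; destruct H; [right|left]; auto
    | apply rt_refl | eapply rt_trans; eauto].
Qed.

Lemma edge2_chain_mono DL DR DL' DR' a b : incl DL DL' -> incl DR DR' ->
  clos_refl_trans _ (edge2 DL DR) a b -> clos_refl_trans _ (edge2 DL' DR') a b.
Proof.
  intros HL HR. induction 1 as [x y H| |]; [| apply rt_refl | eapply rt_trans; eauto].
  apply rt_step. destruct H as [[t [u [Hi Hx]]]|[t [u [Hi Hx]]]]; [left|right]; exists t, u; auto.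
Qed.

(* A step
   expands the head of the queue and moves it to the back, so that every
   formula is expanded again and again (fairness); at stage k a universal
   quantifier is instantiated by the name N + k, fresh when N bounds the
   names of the root.  [step_sound] shows that interpolants propagate from
   the successors of a state to the state itself. *)

Record state : Type := mkState {
  facts : list fact;
  queue : list (bool * formula);
  stage : nat }.

Definition matchf (T : ty) (t : term (TSet T)) (g : fact) : bool :=
  if ty_eq_dec (fT g) T then if nterm_eq_dec (tnorm (ft g)) (tnorm t) then true else false
  else false.

Lemma matchf_spec T t g : matchf T t g = true ->
  exists s m t', g = mkFact s m T t' /\ tnorm t' = tnorm t.
Proof.
  destruct g as [s m T' t']. unfold matchf; simpl.
  destruct (ty_eq_dec T' T) as [<-|]; [|discriminate].
  destruct (nterm_eq_dec (tnorm t') (tnorm t)); [|discriminate]. eauto.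
Qed.

Lemma matchf_intro T t s m t' : tnorm t' = tnorm t -> matchf T t (mkFact s m T t') = true.
Proof.
  intros H. unfold matchf; simpl. destruct (ty_eq_dec T T) as [E|]; [|congruence].
  destruct (nterm_eq_dec (tnorm t') (tnorm t)); congruence.
Qed.

Definition expand (N : nat) (P : list fact) (k : nat) (s : bool) (phi : formula)
  : list (list fact * list (bool * formula)) :=
  match phi with
  | fOr a b => [([], [(s, a); (s, b)])]
  | fAnd a b => [([], [(s, a)]); ([], [(s, b)])]
  | fAll n T t p => [([mkFact s (N + k) T t], [(s, ren n T (N + k) p)])]
  | fEx n T t p => [([], map (fun g => (s, ren n T (fm g) p)) (filter (matchf T t) P))]
  | _ => [([], [])]
  end.

Definition succ (N : nat) (st : state) : list state :=
  match queue st with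
  | [] => [mkState (facts st) [] (S (stage st))]
  | (s, phi) :: rest =>
      map (fun alt => mkState (facts st ++ fst alt) (rest ++ (s, phi) :: snd alt) (S (stage st)))
        (expand N (facts st) (stage st) s phi)
  end.

Lemma expand_side N P k s phi alt : In alt (expand N P k s phi) ->
  (forall f, In f (fst alt) -> fside f = s) /\ (forall x, In x (snd alt) -> fst x = s).
Proof.
  destruct phi; simpl; intros H; repeat destruct H as [<-|H]; try contradiction; simpl;
    split; intros x Hx; repeat destruct Hx as [<-|Hx]; try contradiction; auto.
  apply in_map_iff in Hx as [g [<- _]]. reflexivity.
Qed.

Definition inv (N : nat) (st : state) : Prop :=
  (forall s phi v, In (s, phi) (queue st) -> bnd phi v -> fst v < N) /\
  (forall s phi v, In (s, phi) (queue st) -> FV phi v -> fst v < N + stage st) /\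
  (forall f, In f (facts st) -> N <= fm f /\ forall v, fvars f v -> fst v < N + stage st).

Lemma expand_inv N P k s phi alt :
  (forall v, bnd phi v -> fst v < N) -> (forall v, FV phi v -> fst v < N + k) ->
  (forall f, In f P -> forall v, fvars f v -> fst v < N + k) ->
  In alt (expand N P k s phi) ->
  (forall s' phi' v, In (s', phi') (snd alt) -> bnd phi' v -> fst v < N) /\
  (forall s' phi' v, In (s', phi') (snd alt) -> FV phi' v -> fst v < N + S k) /\
  (forall f, In f (fst alt) -> N <= fm f /\ forall v, fvars f v -> fst v < N + S k).
Proof.
  intros Hb Hf HP Halt.
  assert (Hf' : forall v, FV phi v -> fst v < N + S k) by (intros v Hv; specialize (Hf v Hv); lia).
  destruct phi; simpl in Halt, Hb, Hf'; repeat destruct Halt as [<-|Halt]; try contradiction;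
    simpl; (split; [|split]); try (intros; contradiction).
  - intros s' phi' v [E|[E|[]]] Hv; injection E as <- <-; auto.
  - intros s' phi' v [E|[E|[]]] Hv; injection E as <- <-; auto.
  - intros s' phi' v [E|[]] Hv; injection E as <- <-; auto.
  - intros s' phi' v [E|[]] Hv; injection E as <- <-; auto.
  - intros s' phi' v [E|[]] Hv; injection E as <- <-; auto.
  - intros s' phi' v [E|[]] Hv; injection E as <- <-; auto.
  - intros s' phi' v [E|[]] Hv; injection E as <- <-. apply bnd_ren in Hv. auto.
  - intros s' phi' v [E|[]] Hv; injection E as <- <-.
    apply FV_ren in Hv as [[Hv Hne]| ->]; [auto | simpl; lia].
  - intros f [<-|[]]. split; [simpl; lia|]. intros v [->|Hv]; [simpl; lia | auto].
  - intros s' phi' v Hin Hv. apply in_map_iff in Hin as [g [E _]]. injection E as <- <-.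
    apply bnd_ren in Hv. auto.
  - intros s' phi' v Hin Hv. apply in_map_iff in Hin as [g [E Hg]]. injection E as <- <-.
    apply filter_In in Hg as [Hg Hm]. apply matchf_spec in Hm as [s0 [m0 [t0 [-> _]]]].
    apply FV_ren in Hv as [[Hv Hne]| ->]; [auto|].
    assert (fst (m0, T) < N + k) by (apply (HP _ Hg); left; reflexivity). simpl in *. lia.
Qed.

Lemma succ_inv N st st' : inv N st -> In st' (succ N st) ->
  inv N st' /\ stage st' = S (stage st).
Proof.
  destruct st as [P Q k]. unfold succ, inv; simpl. intros [J1 [J2 J3]] Hin.
  destruct Q as [|[s phi] rest].
  - destruct Hin as [<-|[]]. simpl. split; [|reflexivity].
    split; [|split]; try (intros; contradiction).
    intros f Hf. destruct (J3 f Hf) as [H1 H2]. split; auto. intros v Hv. specialize (H2 v Hv). lia.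
  - apply in_map_iff in Hin as [alt [<- Halt]]. simpl. split; [|reflexivity].
    destruct (expand_inv N P k s phi alt) as [K1 [K2 K3]]; try assumption.
    + intros v Hv. apply (J1 s phi v); simpl; auto.
    + intros v Hv. apply (J2 s phi v); simpl; auto.
    + intros f Hf v Hv. apply (J3 f Hf), Hv.
    + split; [|split].
      * intros s' phi' v H Hv. apply in_app_iff in H as [H|[E|H]].
        -- apply (J1 s' phi' v); simpl; auto.
        -- injection E as <- <-. apply (J1 s phi v); simpl; auto.
        -- apply (K1 s' phi' v H Hv).
      * intros s' phi' v H Hv. apply in_app_iff in H as [H|[E|H]].
        -- specialize (J2 s' phi' v (or_intror H) Hv). lia.
        -- injection E as <- <-. specialize (J2 s phi v (or_introl eq_refl) Hv). lia.
        -- apply (K2 s' phi' v H Hv).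
      * intros f Hf. apply in_app_iff in Hf as [Hf|Hf]; [|apply K3, Hf].
        destruct (J3 f Hf) as [H1 H2]. split; auto. intros v Hv. specialize (H2 v Hv). lia.
Qed.

Definition formsOf (b : bool) (Q : list (bool * formula)) : list formula :=
  map snd (filter (fun x => Bool.eqb (fst x) b) Q).
Definition factsOf (b : bool) (P : list fact) : list fact :=
  filter (fun f => Bool.eqb (fside f) b) P.

Lemma In_formsOf b Q phi : In phi (formsOf b Q) <-> In (b, phi) Q.
Proof.
  unfold formsOf. rewrite in_map_iff. split.
  - intros [[b' x] [<- H]]. apply filter_In in H as [H1 H2].
    apply Bool.eqb_prop in H2. simpl in *. subst; auto.
  - intros H. exists (b, phi). split; auto. apply filter_In. split; auto. apply Bool.eqb_reflx.
Qed.

Lemma In_factsOf b P f : In f (factsOf b P) <-> In f P /\ fside f = b.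
Proof.
  unfold factsOf. rewrite filter_In. split; intros [H1 H2]; split; auto.
  - apply Bool.eqb_prop; auto.
  - subst; apply Bool.eqb_reflx.
Qed.

Definition InterpS (st : state) : Prop :=
  Interp (factsOf true (facts st)) (factsOf false (facts st))
         (formsOf true (queue st)) (formsOf false (queue st)).

(* The same sequent viewed from side s, which lets the left rules serve
   both sides. *)
Definition Sided (s : bool) (st : state) : Prop :=
  Interp (factsOf s (facts st)) (factsOf (negb s) (facts st))
         (formsOf s (queue st)) (formsOf (negb s) (queue st)).

Lemma InterpS_sided s st : InterpS st <-> Sided s st.
Proof. destruct s; [reflexivity | split; apply Interp_swap]. Qed.

Lemma Lang_bound N st b b' v : inv N st ->
  Lang (factsOf b (facts st)) (formsOf b' (queue st)) v -> fst v < N + stage st.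
Proof.
  intros [_ [J2 J3]] [[q [Hq Hv]]|[f [Hf Hv]]].
  - rewrite In_formsOf in Hq. eapply J2; eauto.
  - rewrite In_factsOf in Hf. apply (J3 f); tauto.
Qed.

Lemma child_premise N P s phi rest k k' alt :
  In alt (expand N P k s phi) ->
  Sided s (mkState (P ++ fst alt) (rest ++ (s, phi) :: snd alt) k') ->
  Interp (fst alt ++ factsOf s P) (factsOf (negb s) P)
         (map snd (snd alt) ++ formsOf s ((s, phi) :: rest)) (formsOf (negb s) ((s, phi) :: rest)).
Proof.
  intros Halt. destruct (expand_side N P k s phi alt Halt) as [Hf Hq].
  unfold Sided; simpl. apply Interp_weaken; intros x Hx.
  - apply In_factsOf in Hx as [Hx Hs]. apply in_app_iff in Hx as [Hx|Hx]; apply in_app_iff;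
      [right; apply In_factsOf | left]; auto.
  - apply In_factsOf in Hx as [Hx Hs]. apply in_app_iff in Hx as [Hx|Hx].
    + apply In_factsOf; auto.
    + rewrite (Hf x Hx) in Hs. destruct s; discriminate.
  - apply In_formsOf in Hx. apply in_app_iff. rewrite In_formsOf. simpl.
    apply in_app_iff in Hx as [Hx|[Hx|Hx]]; auto.
    left. apply in_map_iff. exists (s, x). auto.
  - apply In_formsOf in Hx. rewrite In_formsOf. simpl.
    apply in_app_iff in Hx as [Hx|[Hx|Hx]]; auto.
    apply Hq in Hx. simpl in Hx. destruct s; discriminate.
Qed.

Lemma ex_instances s P DL DR n T t p gs :
  In (fEx n T t p) DL ->
  (forall g, In g gs -> In g P /\ matchf T t g = true /\ ~ bnd p (fm g, T)) ->
  Interp (factsOf s P) (factsOf (negb s) P) (map (fun g => ren n T (fm g) p) gs ++ DL) DR ->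
  Interp (factsOf s P) (factsOf (negb s) P) DL DR.
Proof.
  intros Hin. induction gs as [|g gs IH]; simpl; intros Hg H; auto.
  destruct (Hg g (or_introl eq_refl)) as [HgP [Hm Hb]].
  apply matchf_spec in Hm as [s' [m [t' [-> Hk]]]]. simpl in Hb.
  apply IH; [intros; apply Hg; auto|].
  destruct (bool_dec s' s) as [<-|Hs].
  - eapply rule_ex_same_L with (s := s') (t' := t'); eauto.
    + apply in_app_iff; auto.
    + apply In_factsOf; auto.
  - eapply rule_ex_cross_L with (s := s') (t' := t'); eauto.
    + apply in_app_iff; auto.
    + apply In_factsOf. split; auto. destruct s, s'; simpl; congruence.
Qed.

Lemma step_sound N st : inv N st ->
  (forall st', In st' (succ N st) -> InterpS st') -> InterpS st.
Proof.
  destruct st as [P Q k]. intros Hinv Hs.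
  destruct Q as [|[s phi] rest]; [exact (Hs _ (or_introl eq_refl))|].
  assert (Hprem : forall alt, In alt (expand N P k s phi) ->
    Interp (fst alt ++ factsOf s P) (factsOf (negb s) P)
           (map snd (snd alt) ++ formsOf s ((s, phi) :: rest))
           (formsOf (negb s) ((s, phi) :: rest))).
  { intros alt Halt. apply (child_premise N P s phi rest k (S k)); auto.
    apply InterpS_sided, Hs. apply in_map_iff. eauto. }
  assert (Hhead : In phi (formsOf s ((s, phi) :: rest))) by (apply In_formsOf; left; auto).
  assert (Hfresh : forall b b' T, ~ Lang (factsOf b P) (formsOf b' ((s, phi) :: rest)) (N + k, T))
    by (intros b b' T H; apply (Lang_bound N _ b b' _ Hinv) in H; simpl in H; lia).
  assert (Hbnd : forall v, bnd phi v -> fst v < N)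
    by (intros v Hv; destruct Hinv as [J1 _]; apply (J1 s phi v); simpl; auto).
  apply (InterpS_sided s). unfold Sided; simpl.
  destruct phi; simpl in Hprem.
  1-4: exact (Hprem _ (or_introl eq_refl)).
  - exact (rule_or_L _ _ _ _ _ _ Hhead (Hprem _ (or_introl eq_refl))).
  - exact (rule_and_L _ _ _ _ _ _ Hhead (Hprem _ (or_introl eq_refl))
             (Hprem _ (or_intror (or_introl eq_refl)))).
  - apply (rule_all_L _ _ _ _ n T t phi (N + k) s Hhead); auto.
    + intros Hb. specialize (Hbnd _ (or_intror Hb)). simpl in Hbnd. lia.
    + exact (Hprem _ (or_introl eq_refl)).
  - specialize (Hprem _ (or_introl eq_refl)). simpl in Hprem. rewrite map_map in Hprem.
    apply (ex_instances s P _ _ n T t phi (filter (matchf T t) P)); auto.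
    intros g Hg. apply filter_In in Hg as [Hg Hm]. split; [|split]; auto.
    intros Hb. specialize (Hbnd _ (or_intror Hb)).
    destruct Hinv as [_ [_ J3]]. destruct (J3 g Hg) as [J _]. simpl in *. lia.
Qed.

(* If the root is not closed, choosing at each step an
   unclosed successor (which exists by [step_sound]) yields an infinite
   branch of unclosed states. *)

Definition next (N : nat) (st : state) : state :=
  epsilon (inhabits st) (fun st' => In st' (succ N st) /\ ~ InterpS st').

Fixpoint branch (N : nat) (root : state) (k : nat) : state :=
  match k with 0 => root | S k => next N (branch N root k) end.

Lemma next_spec N st : inv N st -> ~ InterpS st ->
  In (next N st) (succ N st) /\ ~ InterpS (next N st).
Proof.
  intros Hi Hn. unfold next. apply epsilon_spec.
  apply NNPP. intros Hc. apply Hn, (step_sound N); auto.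
  intros st' Hs. apply NNPP. intros Hn'. apply Hc. exists st'; auto.
Qed.

Section OpenBranch.
Variables (N : nat) (root : state).
Hypothesis root_inv : inv N root.
Hypothesis root_open : ~ InterpS root.
Hypothesis root_stage : stage root = 0.
Hypothesis root_queue : queue root <> [].

Notation br := (branch N root).

Lemma branch_open k : inv N (br k) /\ ~ InterpS (br k) /\ stage (br k) = k.
Proof.
  induction k as [|k [Ha [Hb Hc]]]; simpl; auto.
  destruct (next_spec N _ Ha Hb) as [Hs Hn].
  destruct (succ_inv N _ _ Ha Hs) as [Hi Hk]. split; [|split]; auto. rewrite Hk, Hc; auto.
Qed.

Lemma branch_step k : exists s phi rest alt,
  queue (br k) = (s, phi) :: rest /\ In alt (expand N (facts (br k)) k s phi) /\
  br (S k) = mkState (facts (br k) ++ fst alt) (rest ++ (s, phi) :: snd alt) (S k).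
Proof.
  induction k as [|k IH].
  - destruct (queue root) as [|[s phi] rest] eqn:Eq; [contradiction|].
    destruct (branch_open 0) as [Hi [Hn _]].
    destruct (next_spec N _ Hi Hn) as [Hs _]. simpl in *. unfold succ in Hs.
    rewrite Eq, root_stage in Hs. apply in_map_iff in Hs as [alt [E Halt]].
    exists s, phi, rest, alt. auto.
  - destruct IH as [s0 [phi0 [rest0 [alt0 [_ [_ Hk]]]]]].
    destruct (branch_open (S k)) as [Hi [Hn Hst]].
    destruct (next_spec N _ Hi Hn) as [Hs _]. change (next N (br (S k))) with (br (S (S k))) in Hs.
    unfold succ in Hs. rewrite Hst in Hs. rewrite Hk in Hs |- *. simpl in Hs |- *.
    destruct (rest0 ++ (s0, phi0) :: snd alt0) as [|[s phi] rest] eqn:Eq;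
      [destruct rest0; discriminate|].
    apply in_map_iff in Hs as [alt [E Halt]].
    exists s, phi, rest, alt. auto.
Qed.
Lemma branch_mono k k' : k <= k' ->
  incl (queue (br k)) (queue (br k')) /\ incl (facts (br k)) (facts (br k')).
Proof.
  induction 1 as [|k' _ [IHq IHf]]; [split; apply incl_refl|].
  destruct (branch_step k') as [s [phi [rest [alt [Eq [_ Ek]]]]]].
  rewrite Ek. simpl. split; intros x Hx.
  - apply IHq in Hx. rewrite Eq in Hx. apply in_app_iff. simpl. destruct Hx; auto.
  - apply in_app_iff. auto.
Qed.

Lemma branch_reach_head x : forall i k pre post,
  queue (br k) = pre ++ x :: post -> length pre = i ->
  exists post', queue (br (i + k)) = x :: post'.
Proof.
  induction i as [|i IH]; intros k pre post H Hl.
  - destruct pre; [|discriminate]. eauto.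
  - destruct pre as [|h pre']; [discriminate|]. simpl in Hl.
    destruct (branch_step k) as [s [phi [rest [alt [Eq [_ Ek]]]]]].
    rewrite Eq in H. injection H as <- Hr.
    replace (S i + k) with (i + S k) by lia.
    apply (IH (S k) pre' (post ++ (s, phi) :: snd alt)); [|lia].
    rewrite Ek, Hr. simpl. rewrite <- app_assoc. reflexivity.
Qed.

Lemma branch_expands k s phi k0 : In (s, phi) (queue (br k)) ->
  exists K alt, k0 <= K /\ In (s, phi) (queue (br K)) /\
    In alt (expand N (facts (br K)) K s phi) /\
    incl (fst alt) (facts (br (S K))) /\ incl (snd alt) (queue (br (S K))).
Proof.
  intros H. assert (H' : In (s, phi) (queue (br (Nat.max k k0))))
    by (apply (branch_mono k); auto; lia).
  apply in_split in H' as [pre [post Hp]].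
  destruct (branch_reach_head _ _ _ _ _ Hp eq_refl) as [post' Hq].
  set (K := length pre + Nat.max k k0) in Hq.
  destruct (branch_step K) as [s' [phi' [rest [alt [Eq [Halt Ek]]]]]].
  rewrite Hq in Eq. injection Eq as <- <- <-.
  exists K, alt. split; [unfold K; lia|]. rewrite Hq, Ek. simpl.
  split; [left; reflexivity|]. split; [exact Halt|].
  split; intros x Hx; apply in_app_iff; simpl; auto.
Qed.
(* Atoms are classes of normal forms, identified when a
   disequation of the branch forces them equal; a normal form of set type
   denotes the set of names introduced as its elements along the branch. *)

Definition forced_eq (a c : nterm) : Prop :=
  exists k s t u, In (s, fNeq t u) (queue (br k)) /\ a = tnorm t /\ c = tnorm u.

Definition same_atom : nterm -> nterm -> Prop := clos_refl_sym_trans nterm forced_eq.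

Definition Atom : Type := nterm -> Prop.

Fixpoint nval (T : ty) : nterm -> interp Atom T :=
  match T return nterm -> interp Atom T with
  | TUr => fun n => same_atom n
  | TUnit => fun _ => tt
  | TProd T1 T2 => fun n => (nval T1 (nproj true n), nval T2 (nproj false n))
  | TSet T1 => fun n a => exists k f, In f (facts (br k)) /\ fT f = T1 /\
                 tnorm (ft f) = n /\ a = nval T1 (NPath (fm f, T1) [])
  end.

Definition menv : env Atom := fun n T => nval T (NPath (n, T) []).

Lemma teval_menv T (t : term T) : teval menv t = nval T (tnorm t).
Proof. induction t; simpl; try rewrite IHt; try rewrite IHt1, IHt2; reflexivity. Qed.

Lemma same_atom_stage a c : same_atom a c -> forall k0, exists K, k0 <= K /\
  clos_refl_trans _ (edge2 (formsOf true (queue (br K))) (formsOf false (queue (br K)))) a c.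
Proof.
  assert (Hmono : forall K K', K <= K' -> forall b, incl (formsOf b (queue (br K)))
                                                     (formsOf b (queue (br K'))))
    by (intros K K' HK b x; rewrite !In_formsOf; apply branch_mono; auto).
  induction 1 as [x y [k [s [t [u [Hin [-> ->]]]]]]| x | x y _ IH | x y z _ IH1 _ IH2];
    intros k0.
  - exists (Nat.max k k0). split; [lia|]. apply rt_step.
    assert (Hin' : In (fNeq t u) (formsOf s (queue (br (Nat.max k k0)))))
      by (apply In_formsOf, (branch_mono k); auto; lia).
    destruct s; [left|right]; exists t, u; auto.
  - exists k0. split; auto. apply rt_refl.
  - destruct (IH k0) as [K [HK Hc]]. exists K. split; auto. apply edge2_chain_sym; auto.
  - destruct (IH1 k0) as [K1 [HK1 Hc1]]. destruct (IH2 K1) as [K2 [HK2 Hc2]].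
    exists K2. split; [lia|]. eapply rt_trans; [|exact Hc2].
    eapply edge2_chain_mono; [apply Hmono, HK2 | apply Hmono, HK2 | exact Hc1].
Qed.

Definition refuted (phi : formula) : Prop :=
  forall k s, In (s, phi) (queue (br k)) -> ~ sat menv phi.

Lemma branch_not_closed K s : ~ Sided s (br K).
Proof.
  intros H. apply (InterpS_sided s) in H. destruct (branch_open K) as [_ [Hn _]]. auto.
Qed.

(* An equation true in the countermodel is chained by forced equalities,
   which would close the branch. *)
Lemma refuted_eq t u : refuted (fEq t u).
Proof.
  intros k s Hin Hsat. simpl in Hsat. rewrite !teval_menv in Hsat. simpl in Hsat.
  assert (HR : same_atom (tnorm t) (tnorm u))
    by (rewrite Hsat; apply rst_refl).
  destruct (same_atom_stage _ _ HR k) as [K [HK Hc]].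
  apply (branch_not_closed K s). eapply (rule_eq_L _ _ _ _ t u).
  - apply In_formsOf, (branch_mono k); auto.
  - destruct s; [exact Hc | apply edge2_chain_swap, Hc].
Qed.

Lemma refuted_neq t u : refuted (fNeq t u).
Proof.
  intros k s Hin Hsat. apply Hsat. rewrite !teval_menv. simpl.
  assert (HR : same_atom (tnorm t) (tnorm u)) by (apply rst_step; exists k, s, t, u; auto).
  apply functional_extensionality. intros c. apply propositional_extensionality.
  split; intros H; [eapply rst_trans; [apply rst_sym, HR | exact H]
                   | eapply rst_trans; [exact HR | exact H]].
Qed.

Lemma refuted_top : refuted fTop.
Proof.
  intros k s Hin _. apply (branch_not_closed k s), rule_top_L, In_formsOf, Hin.
Qed.

Lemma refuted_bot : refuted fBot.
Proof. intros k s _ []. Qed.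

Lemma refuted_or a b : refuted a -> refuted b -> refuted (fOr a b).
Proof.
  intros Ha Hb k s Hin.
  destruct (branch_expands k s _ k Hin) as [K [alt [_ [_ [Halt [_ Hq]]]]]].
  simpl in Halt. destruct Halt as [<-|[]]. simpl in Hq.
  intros [Hs|Hs]; [apply (Ha (S K) s) | apply (Hb (S K) s)]; auto; apply Hq; simpl; auto.
Qed.

Lemma refuted_and a b : refuted a -> refuted b -> refuted (fAnd a b).
Proof.
  intros Ha Hb k s Hin.
  destruct (branch_expands k s _ k Hin) as [K [alt [_ [_ [Halt [_ Hq]]]]]].
  simpl in Halt. intros [Hsa Hsb].
  destruct Halt as [<-|[<-|[]]]; simpl in Hq;
    [apply (Ha (S K) s) | apply (Hb (S K) s)]; auto; apply Hq; simpl; auto.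
Qed.

Lemma branch_fresh_bound K s phi m T : In (s, phi) (queue (br K)) -> N <= m -> ~ bnd phi (m, T).
Proof.
  intros Hin Hm Hb. destruct (branch_open K) as [[J1 _] _].
  specialize (J1 s phi (m, T) Hin Hb). simpl in J1. lia.
Qed.

(* The fresh name introduced for a universal quantifier is a counterexample. *)
Lemma refuted_all n T t p : (forall m, refuted (ren n T m p)) -> refuted (fAll n T t p).
Proof.
  intros IH k s Hin.
  destruct (branch_expands k s _ k Hin) as [K [alt [_ [HinK [Halt [Hf Hq]]]]]].
  simpl in Halt. destruct Halt as [<-|[]]. simpl in Hf, Hq.
  assert (Hb : ~ bnd p (N + K, T))
    by (intros Hb; apply (branch_fresh_bound K s _ (N + K) T HinK); simpl; auto; lia).
  intros Hall. apply (IH (N + K) (S K) s); [apply Hq; left; reflexivity|].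
  apply sat_ren; auto. apply Hall.
  rewrite teval_menv. exists (S K), (mkFact s (N + K) T t). simpl. repeat split; auto.
  apply Hf. left. reflexivity.
Qed.

(* Every element of a bounding set is a name whose instance gets queued. *)
Lemma refuted_ex n T t p : (forall m, refuted (ren n T m p)) -> refuted (fEx n T t p).
Proof.
  intros IH k s Hin [a [Ha Hp]]. rewrite teval_menv in Ha.
  destruct Ha as [k1 [[s' m T' t'] [Hf [HT [Hk ->]]]]]. simpl in *. subst T'.
  destruct (branch_expands k s _ k1 Hin) as [K [alt [HK [HinK [Halt [_ Hq]]]]]].
  simpl in Halt. destruct Halt as [<-|[]]. simpl in Hq.
  assert (HfK : In (mkFact s' m T t') (facts (br K))) by (apply (branch_mono k1); auto).
  assert (Hm : N <= m).
  { destruct (branch_open K) as [[_ [_ J3]] _]. apply (J3 _ HfK). }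
  apply (IH m (S K) s).
  - apply Hq, in_map_iff. exists (mkFact s' m T t'). split; auto.
    apply filter_In. split; auto. apply matchf_intro, Hk.
  - apply sat_ren; [|exact Hp].
    intros Hb. apply (branch_fresh_bound K s _ m T HinK Hm). simpl. auto.
Qed.

Lemma refuted_all_formulas phi : refuted phi.
Proof.
  remember (fsize phi) as sz. assert (Hs : fsize phi <= sz) by lia. clear Heqsz.
  revert phi Hs. induction sz as [|sz IH]; intros phi Hs;
    destruct phi; simpl in Hs;
    auto using refuted_eq, refuted_neq, refuted_top, refuted_bot.
  all: try (exfalso; lia).
  - apply refuted_or; apply IH; lia.
  - apply refuted_and; apply IH; lia.
  - apply refuted_all. intros m. apply IH. rewrite fsize_ren. lia.
  - apply refuted_ex. intros m. apply IH. rewrite fsize_ren. lia.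
Qed.

End OpenBranch.

(* Finitely many formulas use boundedly many names; a bound N for the root
   makes the names N + k fresh. *)
Lemma term_name_bound T (t : term T) : exists B, forall v, tFV t v -> fst v < B.
Proof.
  induction t as [n T| |T S t1 [B1 H1] t2 [B2 H2]|T S t [B H]|T S t [B H]].
  - exists (S n). intros v ->. simpl. lia.
  - exists 0. intros v [].
  - exists (Nat.max B1 B2). intros v [Hv|Hv]; [apply H1 in Hv | apply H2 in Hv]; lia.
  - exists B. exact H.
  - exists B. exact H.
Qed.

Lemma formula_name_bound phi : exists B, forall v, FV phi v \/ bnd phi v -> fst v < B.
Proof.
  induction phi as [t u|t u| | |p [B1 H1] q [B2 H2]|p [B1 H1] q [B2 H2]
                   |n T t p [B H]|n T t p [B H]].
  1-2: destruct (term_name_bound _ t) as [B1 H1], (term_name_bound _ u) as [B2 H2];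
       exists (Nat.max B1 B2); intros v [[Hv|Hv]|[]]; [apply H1 in Hv | apply H2 in Hv]; lia.
  1-2: exists 0; intros v [[]|[]].
  1-2: exists (Nat.max B1 B2); intros v Hv;
       assert (Hv' : (FV p v \/ bnd p v) \/ (FV q v \/ bnd q v)) by (simpl in Hv; tauto);
       destruct Hv' as [Hv'|Hv']; [apply H1 in Hv' | apply H2 in Hv']; lia.
  all: destruct (term_name_bound _ t) as [Bt Ht]; exists (Nat.max (S n) (Nat.max B Bt));
       intros v [[Hv|[Hv _]]|[->|Hv]];
       [apply Ht in Hv | specialize (H v (or_introl Hv)) | cbn [fst] | specialize (H v (or_intror Hv))];
       lia.
Qed.

Lemma list_name_bound (D : list formula) :
  exists B, forall phi v, In phi D -> FV phi v \/ bnd phi v -> fst v < B.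
Proof.
  induction D as [|phi D [B HB]]; [exists 0; intros ? ? []|].
  destruct (formula_name_bound phi) as [B0 H0]. exists (Nat.max B0 B).
  intros q v [<-|Hq] Hv; [apply H0 in Hv | apply (HB q v Hq) in Hv]; lia.
Qed.

Definition root_state (DL DR : list formula) : state :=
  mkState [] (map (pair true) DL ++ map (pair false) DR) 0.

Lemma formsOf_root b DL DR :
  formsOf b (map (pair true) DL ++ map (pair false) DR) = if b then DL else DR.
Proof.
  assert (Htag : forall b' D, formsOf b (map (pair b') D) = if Bool.eqb b' b then D else []).
  { intros b' D. induction D as [|x D IH]; [destruct (Bool.eqb b' b); reflexivity|].
    unfold formsOf in *. simpl. destruct (Bool.eqb b' b); simpl; rewrite IH; reflexivity. }
  unfold formsOf. rewrite filter_app, map_app. fold (formsOf b (map (pair true) DL)).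
  fold (formsOf b (map (pair false) DR)). rewrite !Htag. destruct b; simpl; auto using app_nil_r.
Qed.

Theorem interpolation_complete (DL DR : list formula) : DR <> [] ->
  (forall A (e : env A), somesat e DL \/ somesat e DR) -> Interp [] [] DL DR.
Proof.
  intros HDR Hvalid. apply NNPP. intros Hopen.
  destruct (list_name_bound (DL ++ DR)) as [N HN].
  set (root := root_state DL DR).
  assert (Hroot_in : forall s phi, In (s, phi) (queue root) -> In phi (DL ++ DR)).
  { intros s phi H. simpl in H. rewrite !in_app_iff, !in_map_iff in *.
    destruct H as [[x [E Hx]]|[x [E Hx]]]; injection E as <- <-; auto. }
  assert (Hinv : inv N root).
  { split; [|split]; simpl; [| | intros f []].
    - intros s phi v H Hv. apply (HN phi v); [apply (Hroot_in s), H | auto].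
    - intros s phi v H Hv. rewrite Nat.add_0_r. apply (HN phi v); [apply (Hroot_in s), H | auto]. }
  assert (Hroot_open : ~ InterpS root)
    by (unfold InterpS; simpl; rewrite !formsOf_root; exact Hopen).
  assert (Hqueue : queue root <> [])
    by (simpl; destruct DR; [contradiction | destruct (map _ DL); discriminate]).
  assert (Hroot : forall s phi, In (s, phi) (queue root) -> ~ sat (menv N root) phi)
    by (intros s phi H; exact (refuted_all_formulas N root Hinv Hroot_open eq_refl Hqueue
                                                      phi 0 s H)).
  destruct (Hvalid _ (menv N root)) as [[p [Hp Hs]]|[p [Hp Hs]]];
    [apply (Hroot true p) | apply (Hroot false p)]; auto; simpl; apply in_app_iff;
    [left | right]; apply in_map_iff; eauto.
Qed.

(* Reading the entailment as a valid sequent: negated premises on either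
   side, the conclusion on the right. *)

Lemma somesat_negs A (e : env A) G : somesat e (map neg G) <-> exists g, In g G /\ ~ sat e g.
Proof.
  unfold somesat. setoid_rewrite in_map_iff. split.
  - intros [p [[g [<- Hg]] Hs]]. exists g. rewrite <- sat_neg. auto.
  - intros [g [Hg Hs]]. exists (neg g). rewrite sat_neg. eauto.
Qed.

Lemma Lang_negs G v : Lang [] (map neg G) v -> FVs G v.
Proof.
  intros [[p [Hp Hv]]|[f [[] _]]]. apply in_map_iff in Hp as [g [<- Hg]].
  exists g. rewrite <- FV_neg. auto.
Qed.

Lemma entails_valid GammaL GammaR psi : entails (GammaL ++ GammaR) psi ->
  forall A (e : env A), somesat e (map neg GammaL) \/ somesat e (map neg GammaR ++ [psi]).
Proof.
  intros Hent A e. rewrite somesat_negs.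
  destruct (classic (exists g, In g (GammaL ++ GammaR) /\ ~ sat e g)) as [[g [Hg Hng]]|Hc].
  - apply in_app_iff in Hg as [Hg|Hg]; [left; eauto|].
    right. exists (neg g). rewrite in_app_iff, in_map_iff, sat_neg. eauto.
  - right. exists psi. split; [apply in_app_iff; right; left; reflexivity|].
    apply Hent. intros g Hg. apply NNPP. intros Hng. eauto.
Qed.

Theorem mainTheorem3 (GammaL GammaR : list formula) (psi : formula) :
  entails (GammaL ++ GammaR) psi ->
  exists theta : formula,
    (forall v, FV theta v -> FVs GammaL v /\ (FVs GammaR v \/ FV psi v)) /\
    entails GammaL theta /\
    entails (GammaR ++ [theta]) psi.
Proof.
  intros Hent.
  destruct (interpolation_complete (map neg GammaL) (map neg GammaR ++ [psi]))
    as [th [Hfv [HL HR]]]; [apply not_eq_sym, app_cons_not_nil | apply entails_valid, Hent |].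
  exists th. split; [|split].
  - intros v Hv. destruct (Hfv v Hv) as [HvL [[p [Hp Hpv]]|[f [[] _]]]].
    split; [apply Lang_negs, HvL|]. apply in_app_iff in Hp as [Hp|[<-|[]]]; auto.
    left. apply Lang_negs. left. eauto.
  - intros A e HG. destruct (HL A e (fun f H => False_ind _ H)) as [Hs|Ht]; auto.
    apply somesat_negs in Hs as [g [Hg Hng]]. exfalso. auto.
  - intros A e HG. destruct (HR A e (fun f H => False_ind _ H)) as [[p [Hp Hs]]|Ht].
    + apply in_app_iff in Hp as [Hp|[<-|[]]]; auto. exfalso.
      apply in_map_iff in Hp as [g [<- Hg]]. rewrite sat_neg in Hs.
      apply Hs, HG, in_app_iff. auto.
    + exfalso. apply Ht, HG, in_app_iff. right. left. reflexivity.
Qed.
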